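(* For every positive integer $s$, $$\sum_{n\ge0}z^n\sum_{j=0}^{n+1}(-1)^{n+1-j}\binom{2n+1}{n+1-j}j^{2s}=\frac12\left(1+\sqrt{1+4z}\right)\left(1+p_s(z)\right)$$ as formal power series, where $p_s(z)$ is a polynomial in $z$ with integer coefficients, all of which are divisible by $3$, and $p_s(0)=0$.
   Context: $\sqrt{1+4z}$ denotes the formal power series square root with constant term $1$. *)

From HB Require Import structures.
From mathcomp Require Import all_boot all_order all_algebra.
Set Implicit Arguments. Unset Strict Implicit. Unset Printing Implicit Defensive.
Import Order.TTheory GRing.Theory Num.Theory.
Local Open Scope ring_scope.

(* A formal power series with rational coefficients: n |-> coefficient of z^n. *)
Definition fps := nat -> rat.

Definition fps_mul (a b : fps) : fps :=
  fun n => \sum_(i < n.+1) a i * b (n - i)%N.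

Definition fps_const (c : rat) : fps := fun n => if n is 0%N then c else 0.

Definition fps_add (a b : fps) : fps := fun n => a n + b n.

Definition one_plus_4z : fps :=
  fun n => if n is 0%N then 1 else if n is 1%N then 4 else 0.

Definition is_sqrt_1_4z (r : fps) : Prop :=
  r 0%N = 1 /\ forall n, fps_mul r r n = one_plus_4z n.

Definition fps_of_poly (p : {poly int}) : fps := fun n => (p`_n)%:~R.

Definition lhs_series (s : nat) : fps :=
  fun n => \sum_(j < n.+2)
     (-1) ^+ (n.+1 - j) * ('C(2 * n + 1, n.+1 - j))%:R * (j%:R) ^+ (2 * s).

From HB Require Import structures.
From mathcomp Require Import all_boot all_order all_algebra.
From mathcomp Require Import ring zify.
Import Order.TTheory GRing.Theory Num.Theory.
Local Open Scope ring_scope.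
Set Implicit Arguments.
Unset Strict Implicit.
Unset Printing Implicit Defensive.

(* Write the n-th coefficient of the left-hand side as an alternating binomial
   transform  T_n f = sum_{i=0}^{n+1} (-1)^i C(2n+1, i) f(n+1-i)  of f(x) = x^{2s}.

   The even polynomials
        cfb_k(x) = ((x+k+1)^{(2k+2)} + (x+k)^{(2k+2)}) / (2k+2)!
      (falling factorials) satisfy cfb_0 = x^2, diff2 cfb_{k+1} = cfb_k for the
      second difference diff2, vanish at -1, 0, 1 when k >= 1, and satisfy
      x^2 cfb_k = (2k+3)(2k+4) cfb_{k+1} + (k+1)^2 cfb_k.  Hence
      x^{2s} = sum_{k<s} b_k cfb_k with natural b_k, b_0 = 1, 3 | b_k for k > 0.
   2. Pascal's rule gives T_{n+1} f = T_n (diff2 f) + boundary terms in f(0),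
      f(-1); so T_n cfb_k = T_{n-k}(x^2) for k <= n and 0 otherwise, while
      T_0(x^2) = 1 and T_{m+1}(x^2) = (-1)^m Catalan(m).
   3. Differentiating r^2 = 1 + 4z shows r_{m+1} = 2 (-1)^m Catalan(m), so the
      coefficients of (1 + r)/2 are exactly T_n(x^2).
   Thus the left-hand side is the Cauchy product of (1 + r)/2 with
   1 + p_s = sum_k b_k z^k, which is the theorem. *)

Section FallingFactorial.
Variable R : comPzRingType.

Fixpoint falling (m : nat) (y : R) : R :=
  if m is m'.+1 then y * falling m' (y - 1) else 1.

Definition diff2 (f : R -> R) (x : R) : R := f (x + 1) - 2 * f x + f (x - 1).

Lemma fallingS m y : falling m.+1 y = y * falling m (y - 1).
Proof. by []. Qed.

Lemma fallingSr m y : falling m.+1 y = falling m y * (y - m%:R).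
Proof.
elim: m y => [|m IH] y; first by rewrite /= subr0 mulr1 mul1r.
by rewrite fallingS IH fallingS -natr1; ring.
Qed.

Lemma falling_diff m y : falling m.+1 (y + 1) - falling m.+1 y = m.+1%:R * falling m y.
Proof.
elim: m y => [|m IH] y; first by rewrite /= !mulr1 addrAC subrr add0r.
have IHy := IH (y - 1); rewrite (subrK 1 y) in IHy.
rewrite (fallingS m.+1) addrK (fallingS m.+1 y).
have -> : falling m.+1 (y - 1) = falling m.+1 y - m.+1%:R * falling m (y - 1).
  by rewrite -IHy; ring.
by rewrite (fallingS m y) -natr1; ring.
Qed.

Lemma falling_diff2 m y :
  diff2 (falling m.+2) y = m.+2%:R * m.+1%:R * falling m (y - 1).
Proof.
have D1 := falling_diff m.+1 y.
have D2 := falling_diff m.+1 (y - 1); rewrite (subrK 1 y) in D2.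
have D3 := falling_diff m (y - 1); rewrite (subrK 1 y) in D3.
have -> : diff2 (falling m.+2) y =
  (falling m.+2 (y + 1) - falling m.+2 y) - (falling m.+2 y - falling m.+2 (y - 1)).
  by rewrite /diff2; ring.
by rewrite D1 D2 -mulrBr D3 mulrA.
Qed.

Lemma falling_nat0 m i : (i < m)%N -> falling m i%:R = 0.
Proof.
elim: m i => [|m IH] [|i] //= lt_im; first by rewrite mul0r.
by rewrite -natr1 addrK IH // mulr0.
Qed.

Lemma diff2_shift (f : R -> R) c x : diff2 (fun y => f (y + c)) x = diff2 f (x + c).
Proof. by rewrite /diff2 (addrAC x 1 c) (addrAC x (-1) c). Qed.

End FallingFactorial.

Section CentralFactorialBasis.
Variable R : numFieldType.

Lemma addr_natS_sub1 (x : R) j : x + j.+1%:R - 1 = x + j%:R.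
Proof. by rewrite -natr1 addrA addrK. Qed.

Lemma fact_neq0 n : n`!%:R != 0 :> R.
Proof. by rewrite pnatr_eq0 -lt0n fact_gt0. Qed.

(* [cfb k] = ((x+k+1)^{(2k+2)} + (x+k)^{(2k+2)}) / (2k+2)!, an even polynomial of
   degree 2k+2; these polynomials form a basis adapted to the second difference. *)
Definition cfb (k : nat) (x : R) : R :=
  (falling k.*2.+2 (x + k.+1%:R) + falling k.*2.+2 (x + k%:R)) / (k.*2.+2)`!%:R.

Lemma cfb0 x : cfb 0 x = x ^+ 2.
Proof.
by rewrite /cfb /= addr0 addrK !mulr1 (_ : 2`!%:R = 2%:R) //; field.
Qed.

Lemma cfb_diff2 k x : diff2 (cfb k.+1) x = cfb k x.
Proof.
pose M := k.*2.+2; pose F := @falling R M.+2.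
have dF c : diff2 (fun y => F (y + c)) x = M.+2%:R * M.+1%:R * falling M (x + c - 1).
  by rewrite diff2_shift falling_diff2 (addrAC x c (-1)).
have -> : diff2 (cfb k.+1) x =
  (diff2 (fun y => F (y + k.+2%:R)) x + diff2 (fun y => F (y + k.+1%:R)) x) / M.+2`!%:R.
  by rewrite /diff2 /cfb /F /M doubleS; ring.
rewrite !dF !addr_natS_sub1 /cfb -/M !factS !natrM; field.
by rewrite fact_neq0 -[1 : R]/(1%:R) -!natrD !pnatr_eq0.
Qed.

(* Three-term relation: (2k+3)(2k+4) cfb_{k+1} = (x^2 - (k+1)^2) cfb_k, so that
   cfb_k is x^2 (x^2 - 1) ... (x^2 - k^2) up to a constant. *)
Lemma cfbS k x :
  (k.*2.+3 * k.*2.+4)%:R * cfb k.+1 x = (x ^+ 2 - k.+1%:R ^+ 2) * cfb k x.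
Proof.
pose M := k.*2.+2.
pose U := falling M (x + k.+1%:R); pose V := falling M (x + k%:R).
pose W := falling M.+1 (x + k.+1%:R).
have eM : x + k.+1%:R - M%:R = x - k.+1%:R by rewrite /M -doubleS -addnn natrD; ring.
have eA : falling M.+2 (x + k.+2%:R) = (x + k.+2%:R) * W by rewrite fallingS addr_natS_sub1.
have eB : falling M.+2 (x + k.+1%:R) = W * (x + k.+1%:R - M.+1%:R) by rewrite fallingSr.
have eW1 : W = (x + k.+1%:R) * V by rewrite /W fallingS addr_natS_sub1.
have eW2 : W = U * (x - k.+1%:R) by rewrite /W fallingSr eM.
have eAB : (x + k.+2%:R) * W + W * (x + k.+1%:R - M.+1%:R) =
           W * (x - k.+1%:R) + W * (x + k.+1%:R).
  by rewrite -eM -!natr1; ring.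
rewrite /cfb doubleS -/M eA eB eAB {1}eW1 eW2 -/U -/V (factS M.+1) (factS M) !natrM.
by field; rewrite fact_neq0 -[1 : R]/(1%:R) -!natrD !pnatr_eq0.
Qed.

Lemma cfb_nat0 k j : (j <= k.*2)%N -> cfb k (j%:R - k%:R) = 0.
Proof.
move=> le_jk; rewrite /cfb -[k.+1%:R]natr1 addrA !subrK natr1.
by rewrite !falling_nat0 ?addr0 ?mul0r //; lia.
Qed.

Lemma sqr_cfb k x :
  x ^+ 2 * cfb k x = (k.*2.+3 * k.*2.+4)%:R * cfb k.+1 x + (k.+1 ^ 2)%:R * cfb k x.
Proof. by rewrite cfbS natrX; ring. Qed.

Lemma even_power_cfb s : exists b : nat -> nat,
  [/\ b 0%N = 1%N, (forall k, 0 < k -> 3 %| b k)%N, (forall k, s < k -> b k = 0)%N &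
      forall x : R, x ^+ (2 * s.+1) = \sum_(k < s.+1) (b k)%:R * cfb k x].
Proof.
elim: s => [|s [b [b0 b3 bs bx]]].
  exists (fun k => if k is 0 then 1 else 0)%N; split => //.
  - by case.
  - by case.
  by move=> x; rewrite big_ord1 cfb0 mul1r.
pose b' k := if k is k'.+1 then (k.+1 ^ 2 * b k + k'.*2.+3 * k'.*2.+4 * b k')%N else 1%N.
exists b'; split => //.
- case=> // [[|k]] _; apply: dvdn_add; try by rewrite dvdn_mull ?b3.
  by rewrite b0.
- by case=> // k lt_sk; rewrite /b' !bs //; lia.
move=> x; rewrite mulnS exprD bx mulr_sumr.
under eq_bigr => k _ do rewrite mulrCA sqr_cfb mulrDr.
have b'E k : (b' k)%:R = (k.+1 ^ 2 * b k)%:R +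
    (if k is k'.+1 then (k'.*2.+3 * k'.*2.+4 * b k')%:R else 0) :> R.
  by case: k => [|k]; rewrite ?b0 ?addr0 // -natrD.
under [RHS]eq_bigr => k _ do rewrite b'E mulrDl.
rewrite !big_split /= [X in _ = _ + X]big_ord_recl [X in _ = X + _]big_ord_recr /= bs // muln0.
rewrite /bump /= !mul0r add0r addr0 addrC.
by congr (_ + _); apply: eq_bigr => k _; rewrite ?add0n ?add1n !natrM; ring.
Qed.
End CentralFactorialBasis.

Definition catalan (m : nat) : nat := 'C(m.*2, m) - 'C(m.*2, m.+1).

(* C(2m, m+1) <= C(2m, m), so the subtraction defining Catalan(m) is exact. *)
Lemma bin_central_succ_le m : ('C(m.*2, m.+1) <= 'C(m.*2, m))%N.
Proof.
have := mul_bin_left m.*2 m; rewrite -addnn addnK => eq_bin.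
by rewrite -(leq_pmul2l (ltn0Sn m)) eq_bin leq_mul2r leqnSn orbT.
Qed.

Lemma catalan_central m : (m.+1 * catalan m = 'C(m.*2, m))%N.
Proof.
rewrite /catalan mulnBr; have := mul_bin_left m.*2 m; rewrite -addnn addnK => ->.
by rewrite -mulnBl subSnn mul1n.
Qed.

Lemma bin_central_rec m : (m.+1 * 'C(m.+1.*2, m.+1) = 2 * m.*2.+1 * 'C(m.*2, m))%N.
Proof.
have e1 := mul_bin_diag m.+1.*2 m; rewrite doubleS /= in e1.
have e2 := mul_bin_diag m.*2.+1 m; rewrite /= in e2.
have sym : 'C(m.*2.+1, m) = 'C(m.*2.+1, m.+1).
  by rewrite -bin_sub; [congr 'C(_, _); lia | lia].
by rewrite doubleS -e1 sym; nia.
Qed.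

Lemma catalan_rec m : (m.+2 * catalan m.+1 = 2 * m.*2.+1 * catalan m)%N.
Proof.
apply/eqP; rewrite -(eqn_pmul2l (ltn0Sn m)) catalan_central bin_central_rec.
by rewrite -catalan_central; apply/eqP; lia.
Qed.

Section BinomialTransform.
Variable R : comPzRingType.

(* Summation by parts against Pascal's rule C(M+1, i) = C(M, i) + C(M, i-1). *)
Lemma alt_binom_pascal (g : nat -> R) M m :
  \sum_(i < m.+2) (-1) ^+ i * ('C(M.+1, i))%:R * g i =
  \sum_(i < m.+1) (-1) ^+ i * ('C(M, i))%:R * (g i - g i.+1)
  + (-1) ^+ m.+1 * ('C(M, m.+1))%:R * g m.+1.
Proof.
elim: m => [|m IH].
  rewrite !big_ord_recr !big_ord0 /= !add0r !bin1 !bin0 expr1 expr0 !mul1r -natr1; ring.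
by rewrite big_ord_recr /= IH [in RHS]big_ord_recr /= binS natrD !exprS; ring.
Qed.

Lemma alt_binom_sum M m :
  \sum_(i < m.+2) (-1) ^+ i * ('C(M.+1, i))%:R = (-1) ^+ m.+1 * ('C(M, m.+1))%:R :> R.
Proof.
have := alt_binom_pascal (fun _ => 1) M m.
rewrite [X in _ = X + _]big1 => [|i _]; last by rewrite subrr mulr0.
by rewrite add0r mulr1 => <-; apply: eq_bigr => i _; rewrite mulr1.
Qed.

Definition bintrans (n : nat) (f : R -> R) : R :=
  \sum_(i < n.+2) (-1) ^+ i * ('C((2 * n).+1, i))%:R * f (n.+1%:R - i%:R).

Lemma eq_bintrans n (f g : R -> R) : f =1 g -> bintrans n f = bintrans n g.
Proof. by move=> fg; apply: eq_bigr => i _; rewrite fg. Qed.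

Lemma bintrans0 f : bintrans 0 f = f 1 - f 0.
Proof.
rewrite /bintrans !big_ord_recr big_ord0 /= muln0 bin0 bin1 subr0 subrr.
by rewrite add0r expr0 expr1 !mulr1 mul1r mulN1r.
Qed.

Lemma bintrans_sum n (I : finType) (c : I -> R) (F : I -> R -> R) :
  bintrans n (fun x => \sum_(k : I) c k * F k x) = \sum_(k : I) c k * bintrans n (F k).
Proof.
rewrite /bintrans; under eq_bigr do rewrite mulr_sumr.
rewrite exchange_big; apply: eq_bigr => k _; rewrite mulr_sumr.
by apply: eq_bigr => i _; rewrite mulrCA.
Qed.

(* Two applications of Pascal's rule turn T_{n+1} into T_n of the second difference,
   up to boundary terms involving f(0) and f(-1). *)
Lemma bintrans_diff2 n f :
  bintrans n.+1 f = bintrans n (diff2 f)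
    + (-1) ^+ n * (('C((2 * n).+1, n.+2))%:R * f 0 + ('C((2 * n).+1, n.+1))%:R * f (-1)).
Proof.
pose g i := f (n.+2%:R - i%:R); pose h i := g i - g i.+1.
have -> : bintrans n.+1 f = \sum_(i < n.+3) (-1) ^+ i * ('C((2 * n).+3, i))%:R * g i.
  by rewrite /bintrans mulnS.
rewrite (alt_binom_pascal g (2 * n).+2 n.+1).
rewrite [X in X + _](eq_bigr (fun i : 'I_n.+2 => (-1) ^+ i * ('C((2 * n).+2, i))%:R * h i)) //.
rewrite (alt_binom_pascal h (2 * n).+1 n).
have -> : bintrans n (diff2 f) = \sum_(i < n.+2) (-1) ^+ i * ('C((2 * n).+1, i))%:R * (h i - h i.+1).
  apply: eq_bigr => i _; rewrite /h /g /diff2; congr (_ * _).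
  have a0 : n.+2%:R - i%:R = n.+1%:R - i%:R + 1 :> R by rewrite -!natr1; ring.
  have a1 : n.+2%:R - i.+1%:R = n.+1%:R - i%:R :> R by rewrite -!natr1; ring.
  have a2 : n.+2%:R - i.+2%:R = n.+1%:R - i%:R - 1 :> R by rewrite -!natr1; ring.
  by rewrite a0 a1 a2; ring.
rewrite [in RHS]big_ord_recr /=.
have eg2 : g n.+2 = f 0 by rewrite /g subrr.
have eg3 : g n.+3 = f (-1) by rewrite /g -[n.+3%:R]natr1 opprD addrA subrr add0r.
rewrite /h eg2 eg3 (binS (2 * n).+1 n.+1) natrD !exprS; ring.
Qed.

End BinomialTransform.

Section TransformOfBasis.
Variable R : numFieldType.

Lemma bintrans_sqr n :
  bintrans n (fun x : R => x ^+ 2) = if n is m.+1 then (-1) ^+ m * (catalan m)%:R else 1.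
Proof.
case: n => [|m]; first by rewrite bintrans0 expr1n expr0n subr0.
have d2sqr : diff2 (fun x : R => x ^+ 2) =1 (fun _ => 2).
  by move=> x; rewrite /diff2; ring.
rewrite bintrans_diff2 (eq_bintrans _ d2sqr) /bintrans -big_distrl /= alt_binom_sum.
rewrite expr0n /= mulr0 add0r sqrrN expr1n mulr1 /catalan natrB ?bin_central_succ_le //.
by rewrite -mul2n (binS (2 * m) m) natrD exprS; ring.
Qed.

(* The roots -1, 0, 1 of cfb_{k+1} are the boundary points of bintrans_diff2. *)
Lemma cfb_boundary_roots k :
  [/\ cfb k.+1 (-1 : R) = 0, cfb k.+1 (0 : R) = 0 & cfb k.+1 (1 : R) = 0].
Proof.
have root j : (j <= k.+1.*2)%N -> cfb k.+1 (j%:R - k.+1%:R) = 0 :> R by exact: cfb_nat0.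
split.
- by have := root k; rewrite -natr1 opprD addrA subrr add0r; apply; lia.
- by have := root k.+1; rewrite subrr; apply; lia.
- by have := root k.+2; rewrite -[k.+2%:R]natr1 addrAC subrr add0r; apply; lia.
Qed.

Lemma bintrans_cfb n k :
  bintrans n (@cfb R k) = if (k <= n)%N then bintrans (n - k) (fun x => x ^+ 2) else 0.
Proof.
elim: n k => [|n IH] [|k]; rewrite ?(eq_bintrans _ (@cfb0 R)) //.
  by have [_ r0 r1] := cfb_boundary_roots k; rewrite bintrans0 r0 r1 subrr.
have [rm1 r0 _] := cfb_boundary_roots k.
by rewrite bintrans_diff2 (eq_bintrans _ (@cfb_diff2 R k)) IH rm1 r0 !(mulr0, addr0).
Qed.

End TransformOfBasis.

Section TruncatedAgreement.
Variable R : nzRingType.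

Definition agree (N : nat) (p q : {poly R}) := forall i, (i <= N)%N -> p`_i = q`_i.

Lemma agree_refl N p : agree N p p.
Proof. by []. Qed.

Lemma agree_le N M p q : (M <= N)%N -> agree N p q -> agree M p q.
Proof. by move=> le_MN pq i le_iM; apply: pq; exact: leq_trans le_iM le_MN. Qed.

Lemma agree_mul N p p' q q' : agree N p p' -> agree N q q' -> agree N (p * q) (p' * q').
Proof.
move=> pp' qq' i le_iN; rewrite !coefM; apply: eq_bigr => j _.
have lt_ji := ltn_ord j.
by rewrite pp' ?qq' //; move: lt_ji le_iN; clear; lia.
Qed.

Lemma agree_deriv N p q : agree N.+1 p q -> agree N p^`() q^`().
Proof. by move=> pq i le_iN; rewrite !coef_deriv pq. Qed.

End TruncatedAgreement.

(* Differentiating r^2 = 1 + 4z gives (1 + 4z) r' = 2 r, that is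
   (m+1) r_{m+1} = (2 - 4m) r_m; we argue on polynomial truncations of r. *)
Lemma sqrt_1_4z_rec (r : fps) : is_sqrt_1_4z r ->
  forall m, m.+1%:R * r m.+1 = (2 - 4 * m%:R) * r m.
Proof.
move=> [r0 rr] M.
pose P := \poly_(i < M.+2) r i; pose Q : {poly rat} := 4%:P * 'X + 1%:P.
have Pr i : (i <= M.+1)%N -> P`_i = r i by move=> le_iM; rewrite coef_poly ltnS le_iM.
have PP : agree M.+1 (P * P) Q.
  move=> i le_iM; rewrite coefM.
  have -> : Q`_i = one_plus_4z i.
    by case: i {le_iM} => [|[|i]]; rewrite /Q coefD coefC coefMX coefC /= ?addr0 ?add0r.
  rewrite -rr; apply: eq_bigr => j _; have lt_ji := ltn_ord j.
  by rewrite !Pr //; move: lt_ji le_iM; clear; lia.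
have PdP : agree M (P * P^`()) 2%:P.
  move=> i le_iM; have := agree_deriv PP le_iM.
  rewrite derivM (mulrC P^`()) -mulr2n /Q derivMXaddC derivC mul0r addr0.
  rewrite coefMn !coefC => PdP2; apply: (@mulIf _ 2) => //.
  by rewrite mulr_natr PdP2; case: (i == 0%N).
have key : (Q * P^`())`_M = (P * 2%:P)`_M.
  rewrite -(agree_mul (agree_le (leqnSn M) PP) (@agree_refl _ M P^`()) (leqnn M)) -mulrA.
  exact: (agree_mul (@agree_refl _ M P) PdP).
move: key; rewrite /Q mulrDl mul1r coefD -mulrA coefCM coefXM coefMC !coef_deriv.
rewrite !Pr ?ltnS ?leq_pred // (_ : (if M == 0%N then 0 else _) = r M *+ M); last by case: (M).
rewrite -(mulr_natr (r M)) -(mulr_natr (r M.+1)) => key.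
have -> : (2 - 4 * M%:R) * r M = r M * 2 - 4 * (r M * M%:R) by ring.
by rewrite -key; ring.
Qed.

Lemma sqrt_1_4z_coef (r : fps) : is_sqrt_1_4z r ->
  forall m, r m.+1 = 2 * (-1) ^+ m * (catalan m)%:R.
Proof.
move=> sqrt_r; have rec := sqrt_1_4z_rec sqrt_r.
elim=> [|m IH]; first by have := rec 0%N; rewrite sqrt_r.1 mul1r mulr0 subr0 mulr1 => ->.
apply: (@mulfI _ m.+2%:R); first by rewrite pnatr_eq0.
have cat_rec := congr1 (fun k => k%:R : rat) (catalan_rec m); rewrite /= !natrM in cat_rec.
rewrite rec IH exprS.
have -> : m.+2%:R * (2 * (-1 * (-1) ^+ m) * (catalan m.+1)%:R) =
  - (2 * (-1) ^+ m) * (m.+2%:R * (catalan m.+1)%:R) :> rat by ring.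
by rewrite cat_rec -!natr1 -addnn natrD; ring.
Qed.

Lemma convolution_supported (R : comPzSemiRingType) (b c : nat -> R) s n :
  (forall k, (s <= k)%N -> b k = 0) ->
  \sum_(k < s) b k * (if (k <= n)%N then c (n - k)%N else 0) =
  \sum_(i < n.+1) c i * b (n - i)%N.
Proof.
move=> b_supp; rewrite [RHS](reindex_inj rev_ord_inj) /=.
under [RHS]eq_bigr => i _ do rewrite subSS subKn ?leq_ord // mulrC.
rewrite (big_ord_widen (n.+1 + s) (fun k => b k * (if (k <= n)%N then c (n - k)%N else 0))) ?leq_addl //.
rewrite (big_ord_widen (n.+1 + s) (fun k => b k * c (n - k)%N)) ?leq_addr //.
rewrite big_mkcond [RHS]big_mkcond /=; apply: eq_bigr => k _.
case: (ltnP k s) => lt_ks; case: (ltnP k n.+1) => lt_kn //.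
- by rewrite -ltnS lt_kn.
- by rewrite leqNgt lt_kn mulr0.
- by rewrite b_supp // mul0r.
Qed.

Lemma lhs_bintrans s n : lhs_series s n = bintrans n (fun x : rat => x ^+ (2 * s)).
Proof.
rewrite /lhs_series /bintrans (reindex_inj rev_ord_inj) /=; apply: eq_bigr => i _.
have le_in : (i <= n.+1)%N by rewrite -ltnS.
by rewrite subSS subKn // natrB // addn1.
Qed.

Lemma half_1_sqrt_coef (r : fps) : is_sqrt_1_4z r ->
  forall n, 2^-1 * fps_add (fps_const 1) r n = bintrans n (fun x : rat => x ^+ 2).
Proof.
move=> sqrt_r [|m]; rewrite bintrans_sqr /fps_add /fps_const.
  by rewrite sqrt_r.1 -[1 + 1]/(2 : rat) mulVf.
by rewrite add0r (sqrt_1_4z_coef sqrt_r) !mulrA mulVf ?mul1r.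
Qed.

Unset Implicit Arguments.

Theorem proposition18p3 (s : nat) (hs : (0 < s)%N) :
  exists p : {poly int},
    (forall i : nat, (3 %| p`_i)%Z) /\ p.[0] = 0 /\
    forall r : fps, is_sqrt_1_4z r ->
      forall n : nat,
        lhs_series s n =
        fps_mul (fun k => 2^-1 * fps_add (fps_const 1) r k)
                (fps_add (fps_const 1) (fps_of_poly p)) n.
Proof.
case: s hs => // s _.
have [b [b0 b3 b_supp expand]] := @even_power_cfb rat s.
(* p collects the coefficients b_k with k > 0, so that 1 + p = sum_k b_k z^k. *)
pose p : {poly int} := \poly_(i < s.+1) (if i is 0 then 0 else (b i)%:Z).
have p_coef i : p`_i = if i is 0 then 0 else (b i)%:Z.
  by rewrite coef_poly; case: ltnP => // lt_si; rewrite b_supp //; case: (i).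
exists p; split; last split.
- by move=> [|i]; rewrite p_coef ?dvdz0 //; apply: b3.
- by rewrite horner_coef0 p_coef.
move=> r sqrt_r n.
(* T_n (x^{2s}) = sum_k b_k T_n cfb_k = sum_{k <= n} b_k T_{n-k}(x^2). *)
rewrite lhs_bintrans (eq_bintrans _ expand) bintrans_sum.
under eq_bigr do rewrite bintrans_cfb -(half_1_sqrt_coef sqrt_r).
pose half k := 2^-1 * fps_add (fps_const 1) r k.
rewrite (@convolution_supported _ (fun k => (b k)%:R) half) => [|k lt_sk]; last by rewrite b_supp.
apply: eq_bigr => i _; congr (_ * _).
by rewrite /fps_add /fps_const /fps_of_poly p_coef; case: (n - i)%N => [|k]; rewrite ?b0 ?add0r.
Qed.
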